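(* Consider a ring gossip network with a source and $n$ end-nodes as described in the context, and let $\rho=\lambda_e/\lambda$. Let $F^{(n)}=\lim_{t\to\infty}\mathbb{E}[F_1(t)]$ denote the average binary freshness of a single end-node. Then $F^{(n)}\to0$ as $n\to\infty$, decreasing as $\left(\frac{1}{\rho}+\frac{1}{\rho^2}\right)n^{-1}$, i.e., $\lim_{n\to\infty}nF^{(n)}=\frac{1}{\rho}+\frac{1}{\rho^2}$.
   Context: Model: The information at the source is updated (a new version is generated) according to a Poisson process of rate $\lambda_e>0$. The source sends its current version to each end-node $j\in\{1,\dots,n\}$ according to a Poisson process of rate $\lambda/n$, where $\lambda>0$. The end-nodes form a bidirectional ring: each end-node $j$ sends its stored version to each of its two ring neighbors $j-1$ and $j+1$ (indices mod $n$) according to a Poisson process of rate $\lambda/2$ each. All processes are independent. A node receiving a version keeps the fresher of its stored and received versions. The binary freshness $F_j(t)$ of node $j$ is $1$ if node $j$ stores the current source version at time $t$ and $0$ otherwise; thus it becomes $0$ whenever the source generates a new version, becomes $1$ when the source updates node $j$, and becomes $\max(F_i,F_j)$ when node $i$ updates node $j$. *)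

From HB Require Import structures.
From mathcomp Require Import all_boot all_order all_algebra.
From mathcomp Require Import all_classical all_reals all_analysis.
Set Implicit Arguments. Unset Strict Implicit. Unset Printing Implicit Defensive.
Import Order.TTheory GRing.Theory Num.Theory.
Import numFieldNormedType.Exports.
Local Open Scope classical_set_scope.
Local Open Scope ring_scope.

(* State of the binary-freshness process of the n end-nodes:
   x j = true  iff node j stores the current source version. *)
Definition state (n : nat) := {ffun 'I_n -> bool}.

(* source generates a new version: everybody becomes stale *)
Definition reset_map n (x : state n) : state n := [ffun _ => false].
Definition src_map n (j : 'I_n) (x : state n) : state n :=
  [ffun k => if k == j then true else x k].
Definition gossip_map n (i j : 'I_n) (x : state n) : state n :=
  [ffun k => if k == j then x i || x j else x k].

Section Gen.
Variable R : realType.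

(* Contribution to the Kolmogorov forward equation of an event occurring at
   rate r and mapping the state x to f x. *)
Definition flow n (r : R) (f : state n -> state n) (p : state n -> R)
  (y : state n) : R :=
  r * \sum_(x : state n) p x * ((f x == y)%:R - (x == y)%:R).

(* Right-hand side (p Q)(y) of the forward equation dp/dt = p Q of the
   continuous-time Markov chain: source refresh at rate le, source -> node j
   at rate l/n for each j, node i -> each ring neighbour (i+1, i-1 mod n) at
   rate l/2 each. *)
Definition fwd_gen n (le l : R) (p : state n -> R) (y : state n) : R :=
  flow le (@reset_map n) p y
  + \sum_(j < n) flow (l / n%:R) (src_map j) p y
  + \sum_(i < n) (flow (l / 2) (gossip_map i (ordS i)) p y
                  + flow (l / 2) (gossip_map i (ord_pred i)) p y).

Definition is_law_of_process n (le l : R) (p : R -> state n -> R) : Prop :=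
  (forall x, 0 <= p 0 x) /\ (\sum_(x : state n) p 0 x = 1)
  /\ (forall x, (fun t => p t x) @ at_right 0 --> p 0 x)
  /\ (forall t : R, 0 < t -> forall y : state n,
        is_derive t (1 : R) (fun s : R => p s y) (fwd_gen le l (p t) y)).

(* E[F_1(t)], node 1 being the ordinal 0 (0-based indexing). *)
Definition mean_fresh1 n (p : R -> state n.+1 -> R) (t : R) : R :=
  \sum_(x : state n.+1) p t x * (x ord0)%:R.

End Gen.

From HB Require Import structures.
From mathcomp Require Import all_boot all_order all_algebra.
From mathcomp Require Import all_classical all_reals all_analysis.
From mathcomp Require Import ring lra zify.
Import Order.TTheory GRing.Theory Num.Theory.
Import numFieldNormedType.Exports.
Local Open Scope classical_set_scope.
Local Open Scope ring_scope.

Set Implicit Arguments.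
Unset Strict Implicit.
Unset Printing Implicit Defensive.

(* For an arc S of consecutive nodes, the event "some node of S holds the
   current version" evolves on its own: it is destroyed at rate le, created by
   the source at rate l |S| / n, and changed by gossip only across the two
   boundary edges of S, each used at rate l / 2, which turns it into the same
   event for S extended by one node at that end (S- or S+).  So the
   probabilities v_S(t) satisfy the linear ODEs
     v_S' = - (le + l |S| / n + l) v_S + l |S| / n + l / 2 (v_S- + v_S+),
   closed at S = the whole ring by v' = - (le + l) v + l.  Going down in |S|
   from n, each v_S converges to the fixed point c_|S| of its equation, so
   F^(n) = c_1.  Induction on the recursion for c_k squeezes it between
   (A k + B) / n - O(k^2 / n^2) and (A k + B) / n, with A = 1/rho and
   B = 1/rho^2; at k = 1 this gives n F^(n) -> 1/rho + 1/rho^2. *)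

Section LinearODE.
Variable R : realType.
Implicit Types (c B T t gs : R) (y g : R -> R).

Lemma is_derive_expRM c t :
  is_derive t 1 (fun s => expR (c * s)) (c * expR (c * t)).
Proof.
have dM : is_derive t 1 ( *%R c) c.
  by have := is_deriveZ c (is_derive_id t 1); rewrite /GRing.scale /= mulr1.
by rewrite mulrC; exact: (is_derive1_comp (is_derive_expR _) dM).
Qed.

Lemma is_derive_bigsum (I : finType) (f : I -> R -> R) (df : I -> R) t :
  (forall i, is_derive t 1 (f i) (df i)) ->
  is_derive t 1 (fun s => \sum_i f i s) (\sum_i df i).
Proof.
rewrite -fct_sumE => hf.
by elim/big_ind2 : _ => // *; [exact: is_derive_cst | exact: is_deriveD].
Qed.

Lemma is_derive_0_is_cst_pos (m : R -> R) (m0 : R) :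
  (forall t, 0 < t -> is_derive t 1 m 0) -> m t @[t --> 0^'+] --> m0 ->
  forall t, 0 < t -> m t = m0.
Proof.
move=> dm cm.
have mE a b : 0 < a -> a <= b -> m b = m a.
  move=> a0 ab; have [|| _ _] := @MVT_segment R m (fun _ => 0) a b ab.
  - by move=> x; rewrite in_itv /= => /andP[ax _]; apply: dm; exact: lt_trans ax.
  - apply: derivable_within_continuous => x; rewrite in_itv /= => /andP[ax _].
    by have [] := dm x (lt_le_trans a0 ax).
  by rewrite mul0r => /eqP; rewrite subr_eq0 => /eqP.
move=> t t0; have mt : m s @[s --> 0^'+] --> m t.
  apply/cvgrPdist_le => e e0; near=> s.
  rewrite (mE s t) ?subrr ?normr0; [exact: ltW | | apply: ltW].
  - by near: s; exact: nbhs_right_gt.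
  - by near: s; exact: nbhs_right_lt.
exact: (cvg_unique _ mt cm).
Unshelve. all: by end_near.
Qed.

Section Forced.
Variables (c : R) (y g : R -> R).
Hypothesis c_gt0 : 0 < c.
Hypothesis dy : forall t, 0 < t -> is_derive t 1 y (- c * y t + g t).

(* [exp (c s) * (y s - B / c)] has derivative [exp (c s) * (g s - B)]. *)
Lemma linear_ode_decay B T : 0 < T -> (forall s, T <= s -> g s <= B) ->
  forall t, T <= t -> expR (c * t) * (y t - B / c) <= expR (c * T) * (y T - B / c).
Proof.
move=> T0 gB t Tt.
have dpsi (s : R) : 0 < s -> is_derive s 1 (fun s => expR (c * s) * (y s - B / c))
                                   (expR (c * s) * (g s - B)).
  move=> s0; have dyB : is_derive s 1 (fun s => y s - B / c) (- c * y s + g s).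
    by have := is_deriveB (dy s0) (is_derive_cst (B / c) s 1); rewrite subr0.
  apply: is_derive_eq (is_deriveM (is_derive_expRM c s) dyB) _.
  by rewrite /GRing.scale /=; field; rewrite gt_eqF.
rewrite -subr_le0.
have [|| xi /[!in_itv] /= /andP[Txi _] ->] :=
  MVT_segment (f := fun s => expR (c * s) * (y s - B / c))
    (df := fun s => expR (c * s) * (g s - B)) Tt.
- by move=> x /[!in_itv] /= /andP[Tx _]; apply: dpsi; exact: lt_trans Tx.
- apply: derivable_within_continuous => x /[!in_itv] /= /andP[Tx _].
  by have [] := dpsi x (lt_le_trans T0 Tx).
rewrite mulr_le0_ge0 ?subr_ge0 // mulr_ge0_le0 ?expR_ge0 //.
by rewrite subr_le0 gB.
Qed.

Lemma linear_ode_eventually_le B e : 0 < e ->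
  (\forall t \near +oo, g t <= B) -> \forall t \near +oo, y t <= B / c + e.
Proof.
move=> e0 [M [_ gB]].
pose T := Num.max M 0 + 1.
have T0 : 0 < T by rewrite ltr_pwDr // le_max lexx orbT.
have MT : M < T by rewrite ltr_pwDr // le_max lexx.
have decay := linear_ode_decay T0 (fun s Ts => gB s (lt_le_trans MT Ts)).
set Q := expR (c * T) * _ in decay.
near=> t.
have Tt : T <= t by near: t; apply: nbhs_pinfty_ge; rewrite num_real.
have tQ : Q / (c * e) <= t by near: t; apply: nbhs_pinfty_ge; rewrite num_real.
rewrite ler_pdivrMr ?mulr_gt0 // in tQ.
have Xe : Q < expR (c * t) * e.
  have : (1 + c * t) * e <= expR (c * t) * e by rewrite ler_pM2r // expR_ge1Dx.
  lra.
have := decay t Tt => hQ.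
have : expR (c * t) * (y t - B / c - e) < 0 by lra.
by rewrite pmulr_rlt0 ?expR_gt0 //; lra.
Unshelve. all: by end_near.
Qed.

End Forced.

Lemma linear_ode_cvg c gs y g : 0 < c ->
  (forall t, 0 < t -> is_derive t 1 y (- c * y t + g t)) ->
  g t @[t --> +oo] --> gs -> y t @[t --> +oo] --> gs / c.
Proof.
move=> c0 dy gcv; apply/cvgrPdist_le => e e0.
have ce : 0 < c * (e / 2) by rewrite mulr_gt0 ?divr_gt0.
have gnear : \forall t \near +oo, `|gs - g t| <= c * (e / 2).
  exact: (cvgrPdist_le _ _).1 gcv _ ce.
have dNy t : 0 < t -> is_derive t 1 (- y) (- c * - y t + - g t).
  by move=> t0; apply: is_derive_eq (is_deriveN (dy t t0)) _; ring.
have up := linear_ode_eventually_le c0 dy (B := gs + c * (e / 2)) (e := e / 2).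
have low := linear_ode_eventually_le c0 dNy (B := - gs + c * (e / 2)) (e := e / 2).
have E1 : (gs + c * (e / 2)) / c + e / 2 = gs / c + e by field; rewrite gt_eqF.
have E2 : (- gs + c * (e / 2)) / c + e / 2 = - (gs / c) + e by field; rewrite gt_eqF.
near=> t.
have : y t <= (gs + c * (e / 2)) / c + e / 2.
  near: t; apply: up; first exact: divr_gt0.
  by apply: filterS gnear => t; rewrite ler_norml => /andP[]; lra.
have : - y t <= (- gs + c * (e / 2)) / c + e / 2.
  near: t; apply: low; first exact: divr_gt0.
  apply: filterS gnear => t; rewrite ler_norml => /andP[h1 h2].
  by change (- g t <= - gs + c * (e / 2)); lra.
rewrite E1 E2 => h1 h2.
by rewrite ler_norml; apply/andP; split; lra.
Unshelve. all: by end_near.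
Qed.

End LinearODE.

Section Generator.
Variable R : realType.

Lemma sum_eq_natrM (T : finType) (a : T) (h : T -> R) :
  \sum_y (a == y)%:R * h y = h a.
Proof.
rewrite (bigD1 a) //= eqxx mul1r big1 ?addr0 // => y /negbTE.
by rewrite eq_sym => ->; rewrite mul0r.
Qed.

Lemma flow_dual n (r : R) (f : state n -> state n) (q h : state n -> R) :
  \sum_y flow r f q y * h y = r * \sum_x q x * (h (f x) - h x).
Proof.
under eq_bigr do rewrite -mulrA big_distrl /=.
rewrite -big_distrr exchange_big /=; congr (_ * _); apply: eq_bigr => x _.
under eq_bigr do rewrite -mulrA.
rewrite -big_distrr /=; congr (_ * _).
by under eq_bigr do rewrite mulrBl; rewrite sumrB !sum_eq_natrM.
Qed.

Definition bwd_gen n (le l : R) (h : state n -> R) (x : state n) : R :=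
  le * (h (reset_map x) - h x)
  + \sum_(j < n) l / n%:R * (h (src_map j x) - h x)
  + \sum_(i < n) (l / 2 * (h (gossip_map i (ordS i) x) - h x)
                  + l / 2 * (h (gossip_map i (ord_pred i) x) - h x)).

Lemma fwd_gen_dual n (le l : R) (q h : state n -> R) :
  \sum_y fwd_gen le l q y * h y = \sum_x q x * bwd_gen le l h x.
Proof.
under eq_bigr do rewrite !mulrDl !big_distrl /=.
rewrite !big_split /= flow_dual.
under [RHS]eq_bigr do rewrite /bwd_gen mulrDr mulrDr !big_distrr /=.
rewrite !big_split /=.
congr (_ + _ + _).
- by rewrite big_distrr /=; apply: eq_bigr => x _; rewrite mulrCA.
- rewrite exchange_big [RHS]exchange_big /=; apply: eq_bigr => j _.
  by rewrite flow_dual big_distrr /=; apply: eq_bigr => x _; rewrite mulrCA.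
- rewrite exchange_big [RHS]exchange_big /=; apply: eq_bigr => i _.
  under eq_bigr do rewrite mulrDl.
  rewrite big_split /= !flow_dual !big_distrr -big_split /=.
  by apply: eq_bigr => x _; ring.
Qed.

End Generator.

Section Process.
Variables (R : realType) (le l : R) (n : nat) (p : R -> state n -> R).
Hypothesis p_law : is_law_of_process le l p.

Lemma is_derive_expectation (h : state n -> R) (t : R) : 0 < t ->
  is_derive t 1 (fun s => \sum_x h x * p s x) (\sum_x p t x * bwd_gen le l h x).
Proof.
case: p_law => _ [_ [_ dp]] t0.
rewrite -fwd_gen_dual; under eq_bigr do rewrite mulrC.
by apply: is_derive_bigsum => x; exact: is_deriveZ (dp t t0 x).
Qed.

Lemma law_mass1 (t : R) : 0 < t -> \sum_x p t x = 1.
Proof.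
move=> t0; case: (p_law) => _ [<- [p_cont _]].
apply: (is_derive_0_is_cst_pos (m := fun s => \sum_x p s x) _ _ t0) => [s s0|].
- have := is_derive_expectation (fun=> 1) s0.
  rewrite big1 => [|x _]; last first.
    by rewrite /bwd_gen !subrr !mulr0 add0r !big1 ?addr0 ?mulr0.
  by under eq_fun do under eq_bigr do rewrite mul1r.
- by apply: cvg_big => //; exact: add_continuous.
Qed.

End Process.

Definition fresh_in n (S : {set 'I_n}) (x : state n) : bool := [exists k in S, x k].

Section FreshIn.
Variables (n : nat) (S : {set 'I_n}).

Lemma fresh_in_reset x : fresh_in S (reset_map x) = false.
Proof. by apply/existsP => -[k]; rewrite ffunE andbF. Qed.

Lemma fresh_in_src j x : fresh_in S (src_map j x) = (j \in S) || fresh_in S x.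
Proof.
apply/existsP/orP => [[k /andP[kS]] | [jS | /existsP[k /andP[kS xk]]]].
- rewrite ffunE; case: eqP => [<- _ | _ xk]; first by left.
  by right; apply/existsP; exists k; rewrite kS.
- by exists j; rewrite jS ffunE eqxx.
- by exists k; rewrite kS ffunE; case: eqP.
Qed.

Lemma fresh_inU1 i x : fresh_in (i |: S) x = x i || fresh_in S x.
Proof.
apply/existsP/orP => [[k /andP[/setU1P[-> | kS] xk]] | [xi | /existsP[k /andP[kS xk]]]].
- by left.
- by right; apply/existsP; exists k; rewrite kS.
- by exists i; rewrite setU11.
- by exists k; rewrite setU1r.
Qed.

Lemma fresh_in_gossip i j x :
  fresh_in S (gossip_map i j x) = fresh_in S x || (j \in S) && x i.
Proof.
apply/existsP/orP => [[k /andP[kS]] | [/existsP[k /andP[kS xk]] | /andP[jS xi]]].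
- rewrite ffunE; case: eqP => [<- /orP[xi | xk] | _ xk].
  + by right; rewrite kS xi.
  + by left; apply/existsP; exists k; rewrite kS.
  + by left; apply/existsP; exists k; rewrite kS.
- by exists k; rewrite kS ffunE; case: eqP => // <-; rewrite xk orbT.
- by exists j; rewrite jS ffunE eqxx xi.
Qed.

Variable R : realType.

Lemma fresh_in_src_diff j x :
  (fresh_in S (src_map j x))%:R - (fresh_in S x)%:R
  = (j \in S)%:R * (1 - (fresh_in S x)%:R) :> R.
Proof. by rewrite fresh_in_src; case: (j \in S); case: fresh_in => /=; ring. Qed.

Lemma fresh_in_gossip_diff i j x :
  (fresh_in S (gossip_map i j x))%:R - (fresh_in S x)%:R
  = ((j \in S) && (i \notin S))%:R
    * ((fresh_in (i |: S) x)%:R - (fresh_in S x)%:R) :> R.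
Proof.
rewrite fresh_in_gossip fresh_inU1.
case iS: (i \in S) => /=; last first.
  by case: (j \in S); case: (x i); case: fresh_in => /=; ring.
have -> : fresh_in S x || (j \in S) && x i = fresh_in S x.
  by apply: orb_idr => /andP[_ xi]; apply/existsP; exists i; rewrite iS.
by rewrite andbF mul0r subrr.
Qed.

End FreshIn.

Section Arcs.
Variable n : nat.
Hypothesis n_gt0 : (0 < n)%N.
Local Open Scope nat_scope.

(* [ring_arc s k] consists of the nodes [-s, ..., k - 1 - s] (mod [n]). *)
Definition rpos s (j : 'I_n) : nat := (j + s) %% n.
Definition ring_arc s k : {set 'I_n} := [set j | rpos s j < k].

Lemma in_ring_arc s k j : (j \in ring_arc s k) = (rpos s j < k).
Proof. by rewrite inE. Qed.

Lemma rpos_lt s j : rpos s j < n.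
Proof. exact: ltn_pmod. Qed.

Lemma rposS s j : rpos s.+1 j = (rpos s j).+1 %% n.
Proof. by rewrite /rpos addnS -[((_ + s) %% n).+1]addn1 modnDml addn1. Qed.

Lemma rpos_ordS s i : rpos s (ordS i) = (rpos s i).+1 %% n.
Proof. by rewrite /rpos /= modnDml -[((_ + s) %% n).+1]addn1 modnDml addn1 addSn. Qed.

Lemma rpos_ord_pred s i : rpos s (ord_pred i) = (rpos s i + n.-1) %% n.
Proof. by rewrite /rpos /= !modnDml; congr (_ %% n); have := ltn_ord i; lia. Qed.

Lemma rpos_inj s : injective (rpos s).
Proof.
move=> i j /eqP; rewrite /rpos eqn_modDr !modn_small // => /eqP.
exact: val_inj.
Qed.

Definition rpos_ord s (j : 'I_n) : 'I_n := Ordinal (rpos_lt s j).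

Lemma rpos_ord_inj s : injective (rpos_ord s).
Proof. by move=> i j /(congr1 val) /rpos_inj. Qed.

Lemma rpos_onto s v : v < n -> exists i, rpos s i = v.
Proof.
move=> vn; have /codomP[i /(congr1 val) /= ->] :=
  injF_onto (@rpos_ord_inj s) (Ordinal vn).
by exists i.
Qed.

Lemma modnS_cases m : m < n ->
  (m.+1 %% n = m.+1 /\ m.+1 < n) \/ (m.+1 %% n = 0 /\ m.+1 = n).
Proof.
move=> mn; case: (ltngtP m.+1 n) => [lt | gt | ->]; last by right; rewrite modnn.
- by left; rewrite modn_small.
- lia.
Qed.

Lemma modn_pred_cases m : m < n ->
  (m = 0 /\ (m + n.-1) %% n = n.-1) \/ (0 < m /\ (m + n.-1) %% n = m.-1).
Proof.
case: m => [|m] mn; first by left; rewrite add0n modn_small //; lia.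
right; split => //; have -> : m.+1 + n.-1 = m + n by lia.
by rewrite modnDr modn_small //; lia.
Qed.

Lemma ring_arc_boundary_ordS s k i : 0 < k < n ->
  (ordS i \in ring_arc s k) && (i \notin ring_arc s k) = (rpos s i == n.-1).
Proof.
rewrite !in_ring_arc rpos_ordS => kn.
by have [[-> ?] | [-> ?]] := modnS_cases (rpos_lt s i); lia.
Qed.

Lemma ring_arc_boundary_ord_pred s k i : 0 < k < n ->
  (ord_pred i \in ring_arc s k) && (i \notin ring_arc s k) = (rpos s i == k).
Proof.
rewrite !in_ring_arc rpos_ord_pred => kn.
by have [[? ->] | [? ->]] := modn_pred_cases (rpos_lt s i); lia.
Qed.

Lemma setU1_ring_arc_last s k i : k < n -> rpos s i = n.-1 ->
  i |: ring_arc s k = ring_arc s.+1 k.+1.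
Proof.
move=> kn si; apply/setP => j; rewrite in_setU1 !in_ring_arc rposS.
have -> : (j == i) = (rpos s j == n.-1).
  by apply/eqP/eqP => [-> // | sj]; apply: (@rpos_inj s); rewrite sj si.
by have [[-> ?] | [-> ?]] := modnS_cases (rpos_lt s j); lia.
Qed.

Lemma setU1_ring_arc_next s k i : rpos s i = k ->
  i |: ring_arc s k = ring_arc s k.+1.
Proof.
move=> si; apply/setP => j; rewrite in_setU1 !in_ring_arc.
have -> : (j == i) = (rpos s j == k).
  by apply/eqP/eqP => [-> // | sj]; apply: (@rpos_inj s); rewrite sj si.
lia.
Qed.

End Arcs.
Arguments ring_arc {n}.

Section ArcGenerator.
Variables (R : realType) (n : nat).
Hypothesis n_gt0 : (0 < n)%N.
Implicit Types (le l : R) (x : state n).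

Lemma sum_ltn_natr k : (k <= n)%N -> \sum_(v < n) (v < k)%N%:R = k%:R :> R.
Proof.
move=> kn; rewrite -(big_mkord xpredT (fun v => (v < k)%N%:R)) (big_cat_nat _ kn) //=.
rewrite (@eq_big_nat _ _ _ 0 k _ (fun=> 1)) => [|v /andP[_ ->] //].
rewrite (@eq_big_nat _ _ _ k n _ (fun=> 0)) => [|v /andP[kv _]].
  by rewrite !sumr_const_nat mul0rn addr0 subn0.
by rewrite ltnNge kv.
Qed.

Lemma sum_ring_arc s k : (k <= n)%N ->
  \sum_(j < n) (j \in ring_arc s k)%:R = k%:R :> R.
Proof.
move=> kn; rewrite -(sum_ltn_natr kn) [RHS](reindex_inj (@rpos_ord_inj n n_gt0 s)).
by apply: eq_bigr => j _; rewrite in_ring_arc.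
Qed.

Lemma sum_ring_arc_boundary_ordS s k x : (0 < k < n)%N ->
  \sum_(i < n) ((ordS i \in ring_arc s k) && (i \notin ring_arc s k))%:R
     * ((fresh_in (i |: ring_arc s k) x)%:R - (fresh_in (ring_arc s k) x)%:R)
  = (fresh_in (ring_arc s.+1 k.+1) x)%:R - (fresh_in (ring_arc s k) x)%:R :> R.
Proof.
move=> kn; have [i si] : exists i : 'I_n, rpos s i = n.-1.
  by apply: (@rpos_onto n n_gt0 s n.-1); rewrite ltn_predL.
rewrite (bigD1 i) //= big1 => [|j ji]; last first.
  rewrite (ring_arc_boundary_ordS n_gt0) // -si (inj_eq (@rpos_inj n s)).
  by rewrite (negbTE ji) mul0r.
rewrite (ring_arc_boundary_ordS n_gt0) // si eqxx mul1r.
by rewrite (setU1_ring_arc_last n_gt0) ?addr0 //; case/andP: kn.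
Qed.

Lemma sum_ring_arc_boundary_ord_pred s k x : (0 < k < n)%N ->
  \sum_(i < n) ((ord_pred i \in ring_arc s k) && (i \notin ring_arc s k))%:R
     * ((fresh_in (i |: ring_arc s k) x)%:R - (fresh_in (ring_arc s k) x)%:R)
  = (fresh_in (ring_arc s k.+1) x)%:R - (fresh_in (ring_arc s k) x)%:R :> R.
Proof.
move=> kn; have [i si] : exists i : 'I_n, rpos s i = k.
  by apply: (@rpos_onto n n_gt0 s k); case/andP: kn.
rewrite (bigD1 i) //= big1 => [|j ji]; last first.
  rewrite (ring_arc_boundary_ord_pred n_gt0) // -si (inj_eq (@rpos_inj n s)).
  by rewrite (negbTE ji) mul0r.
rewrite (ring_arc_boundary_ord_pred n_gt0) // si eqxx mul1r.
by rewrite setU1_ring_arc_next ?addr0.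
Qed.

Lemma bwd_gen_ring_arc le l s k x : (0 < k < n)%N ->
  bwd_gen le l (fun y => (fresh_in (ring_arc s k) y)%:R) x =
    - le * (fresh_in (ring_arc s k) x)%:R
    + l / n%:R * k%:R * (1 - (fresh_in (ring_arc s k) x)%:R)
    + l / 2 * ((fresh_in (ring_arc s.+1 k.+1) x)%:R - (fresh_in (ring_arc s k) x)%:R)
    + l / 2 * ((fresh_in (ring_arc s k.+1) x)%:R - (fresh_in (ring_arc s k) x)%:R).
Proof.
move=> kn; have k_le_n : (k <= n)%N by case/andP: kn => _ /ltnW.
rewrite /bwd_gen fresh_in_reset.
under eq_bigr do rewrite fresh_in_src_diff.
rewrite -big_distrr -big_distrl /= sum_ring_arc //.
under [X in _ + X]eq_bigr do rewrite !fresh_in_gossip_diff.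
rewrite big_split /= -!big_distrr /=.
by rewrite sum_ring_arc_boundary_ordS // sum_ring_arc_boundary_ord_pred //; ring.
Qed.

Lemma bwd_gen_ring le l s x :
  bwd_gen le l (fun y => (fresh_in (ring_arc s n) y)%:R) x =
    - le * (fresh_in (ring_arc s n) x)%:R + l * (1 - (fresh_in (ring_arc s n) x)%:R).
Proof.
rewrite /bwd_gen fresh_in_reset.
under eq_bigr do rewrite fresh_in_src_diff.
rewrite -big_distrr -big_distrl /= sum_ring_arc //.
under [X in _ + X]eq_bigr do
  rewrite !fresh_in_gossip_diff !in_ring_arc !(rpos_lt n_gt0) andbF mul0r mulr0 addr0.
by rewrite big1 // addr0 mulrA mulfVK ?pnatr_eq0 -?lt0n //; ring.
Qed.

End ArcGenerator.

(* [arc_fresh_lim le l n j] is the limiting probability that an arc of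
   [n - j] consecutive nodes holds the current version. *)
Fixpoint arc_fresh_lim (R : realType) (le l : R) (n j : nat) : R :=
  if j is j'.+1 then
    (l / n%:R * (n - j'.+1)%:R + l * arc_fresh_lim le l n j')
    / (le + l / n%:R * (n - j'.+1)%:R + l)
  else l / (le + l).

Section ArcProcess.
Variables (R : realType) (le l : R) (n : nat) (p : R -> state n -> R).
Hypothesis n_gt0 : (0 < n)%N.
Hypothesis p_law : is_law_of_process le l p.
Implicit Type t : R.

Definition arc_prob s k (t : R) : R :=
  \sum_x (fresh_in (ring_arc s k) x)%:R * p t x.

Lemma is_derive_arc_prob s k t : 0 < t -> (0 < k < n)%N ->
  is_derive t 1 (arc_prob s k)
    (- (le + l / n%:R * k%:R + l) * arc_prob s k t
     + (l / n%:R * k%:R + l / 2 * arc_prob s.+1 k.+1 t + l / 2 * arc_prob s k.+1 t)).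
Proof.
move=> t0 kn; apply: is_derive_eq (is_derive_expectation p_law _ t0) _.
rewrite /arc_prob -[X in _ + (X + _ + _)]mulr1.
rewrite -[X in _ + (_ * X + _ + _)](law_mass1 p_law t0) !big_distrr -!big_split /=.
apply: eq_bigr => x _; rewrite bwd_gen_ring_arc //.
by field; rewrite pnatr_eq0 -lt0n.
Qed.

Lemma is_derive_ring_prob s t : 0 < t ->
  is_derive t 1 (arc_prob s n) (- (le + l) * arc_prob s n t + l).
Proof.
move=> t0; apply: is_derive_eq (is_derive_expectation p_law _ t0) _.
rewrite /arc_prob -[X in _ + X]mulr1.
rewrite -[X in _ + _ * X](law_mass1 p_law t0) !big_distrr -!big_split /=.
by apply: eq_bigr => x _; rewrite bwd_gen_ring //; ring.
Qed.

Hypotheses (le_gt0 : 0 < le) (l_gt0 : 0 < l).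

Lemma arc_prob_cvg j s : (j < n)%N ->
  arc_prob s (n - j) t @[t --> +oo] --> arc_fresh_lim le l n j.
Proof.
elim: j s => [|j IH] s jn.
  rewrite subn0 /=; apply: linear_ode_cvg (cvg_cst l); first exact: addr_gt0.
  exact: is_derive_ring_prob.
set k := (n - j.+1)%N.
have kn : (0 < k < n)%N by rewrite /k; lia.
have kS : k.+1 = (n - j)%N by rewrite /k; lia.
have -> : arc_fresh_lim le l n j.+1 =
   (l / n%:R * k%:R + l / 2 * arc_fresh_lim le l n j + l / 2 * arc_fresh_lim le l n j)
   / (le + l / n%:R * k%:R + l).
  by rewrite /= -/k; congr (_ / _); rewrite -addrA -mulrDl -splitr.
apply: (@linear_ode_cvg R (le + l / n%:R * k%:R + l) _ (arc_prob s k) (fun t =>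
  l / n%:R * k%:R + l / 2 * arc_prob s.+1 k.+1 t + l / 2 * arc_prob s k.+1 t)).
- apply: (lt_le_trans le_gt0); rewrite -addrA lerDl addr_ge0 ?(ltW l_gt0) //.
  by rewrite mulr_ge0 // divr_ge0 // ltW.
- by move=> t t0; exact: is_derive_arc_prob.
- rewrite kS; apply: cvgD; first apply: cvgD; first exact: cvg_cst.
  all: by apply: cvgMl_tmp; apply: IH; exact: ltnW.
Qed.

End ArcProcess.

Section FreshAsymptotics.
Variables (R : realType) (le l : R).
Hypotheses (le_gt0 : 0 < le) (l_gt0 : 0 < l).

Let A := l / le.
Let B := A ^+ 2.
(* [E] and [F] make the quadratic [Q] in [lower_le_fresh_step] nonnegative. *)
Let E := l * (A + 1) / le + A + B.
Let b := l * B + 2 * l * E.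
Let F := (l * E + b ^+ 2 / (4 * l)) / le.

Let upper a K := (A * K + B) * a.
Let lower a K := upper a K - (E * K ^+ 2 + F) * a ^+ 2.
Let fresh_step a K C := (l * a * K + l * C) / (le + l * a * K + l).

Let A_ge0 : 0 <= A. Proof. by rewrite divr_ge0 // ltW. Qed.
Let B_ge0 : 0 <= B. Proof. exact: sqr_ge0. Qed.
Let E_ge0 : 0 <= E.
Proof. by rewrite !addr_ge0 // divr_ge0 ?mulr_ge0 ?addr_ge0 // ltW. Qed.
Let F_ge0 : 0 <= F.
Proof.
have b_ge0 : 0 <= b.
  by apply: addr_ge0; apply: mulr_ge0 => //; [exact: ltW | rewrite mulr_ge0 // ltW].
rewrite /F divr_ge0 ?(ltW le_gt0) // addr_ge0 ?mulr_ge0 ?(ltW l_gt0) //.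
by rewrite invr_ge0 mulr_ge0 // ltW.
Qed.

Lemma fresh_step_le_upper a K C : 0 < a -> 0 <= K ->
  C <= upper a (K + 1) -> fresh_step a K C <= upper a K.
Proof.
move=> a_gt0 K_ge0 hC; have [l_ge0 a_ge0] := (ltW l_gt0, ltW a_gt0).
have aK_ge0 : 0 <= l * a * K by rewrite !mulr_ge0.
rewrite ler_pdivrMr; last by rewrite -addrA ltr_wpDr // addr_ge0.
have : l * C <= l * upper a (K + 1) by rewrite ler_pM2l.
have : upper a K * (le + l * a * K + l) - (l * a * K + l * upper a (K + 1))
       = l * a * a * K * (A * K + B).
  by rewrite /upper /B /A; field; exact: lt0r_neq0.
have : 0 <= l * a * a * K * (A * K + B).
  by rewrite !mulr_ge0 // addr_ge0 // mulr_ge0.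
nra.
Qed.

Lemma lower_le_fresh_step a K C : 0 < a -> 0 <= K ->
  lower a (K + 1) <= C -> lower a K <= fresh_step a K C.
Proof.
move=> a_gt0 K_ge0 hC; have [l_ge0 a_ge0] := (ltW l_gt0, ltW a_gt0).
have aK_ge0 : 0 <= l * a * K by rewrite !mulr_ge0.
rewrite ler_pdivlMr; last by rewrite -addrA ltr_wpDr // addr_ge0.
have : l * lower a (K + 1) <= l * C by rewrite ler_pM2l.
pose Q := (le * E - l * A) * K ^+ 2 - b * K - l * E + le * F.
have Q_ge0 : 0 <= Q.
  have -> : Q = le * (A + B) * K ^+ 2 + l * (K - b / (2 * l)) ^+ 2.
    by rewrite /Q /F /E /A; field; rewrite !lt0r_neq0 // mulr_gt0.
  by rewrite addr_ge0 // mulr_ge0 ?sqr_ge0 // mulr_ge0 ?addr_ge0 // ltW.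
have : l * a * K + l * lower a (K + 1) - lower a K * (le + l * a * K + l)
       = a ^+ 2 * Q + a ^+ 2 * (E * K ^+ 2 + F) * (l * a * K).
  by rewrite /lower /upper /Q /F /b /E /B /A; field; rewrite !lt0r_neq0.
have : 0 <= a ^+ 2 * Q + a ^+ 2 * (E * K ^+ 2 + F) * (l * a * K).
  by rewrite addr_ge0 ?mulr_ge0 ?sqr_ge0 // addr_ge0 // mulr_ge0 // sqr_ge0.
nra.
Qed.

Lemma arc_fresh_lim_bounds n j : (0 < n)%N -> (j < n)%N ->
  lower n%:R^-1 (n - j)%:R <= arc_fresh_lim le l n j <= upper n%:R^-1 (n - j)%:R.
Proof.
move=> n_gt0; set a := n%:R^-1.
have a_gt0 : 0 < a by rewrite invr_gt0 ltr0n.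
have na : n%:R * a = 1 by rewrite mulfV // pnatr_eq0 -lt0n.
have a_le1 : a <= 1 by rewrite -na ler_peMl ?ler1n // ltW.
elim: j => [|j IH] jn.
  rewrite subn0 /= /lower.
  have -> : upper a n%:R = A + B * a by rewrite /upper mulrDl -mulrA na mulr1.
  rewrite mulrDl -mulrA -exprMn na expr1n mulr1.
  have lim0_gt0 : 0 < l / (le + l) by rewrite divr_gt0 // addr_gt0.
  have lim0_le : l / (le + l) <= A.
    by rewrite ler_pM2l // lef_pV2 ?posrE ?addr_gt0 // lerDl ltW.
  have AB_le_E : A + B <= E.
    by rewrite /E -addrA lerDr divr_ge0 ?mulr_ge0 ?addr_ge0 // ltW.
  have : 0 <= F * a ^+ 2 by rewrite mulr_ge0 // sqr_ge0.
  have : B * a <= B by rewrite ler_piMr.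
  have : 0 <= B * a by rewrite mulr_ge0 // ltW.
  by move=> *; apply/andP; split; lra.
have [lo up] := andP (IH (ltnW jn)).
have eK : (n - j)%:R = (n - j.+1)%:R + 1 :> R by rewrite natr1; congr _%:R; lia.
rewrite eK in lo up.
by apply/andP; split; [exact: lower_le_fresh_step | exact: fresh_step_le_upper].
Qed.

Lemma arc_fresh_lim_dist n : (0 < n)%N ->
  `|A + B - n%:R * arc_fresh_lim le l n n.-1| <= (E + F) / n%:R.
Proof.
move=> n_gt0; have n0 : n%:R != 0 :> R by rewrite pnatr_eq0 -lt0n.
have jn : (n.-1 < n)%N by rewrite ltn_predL.
have /andP[lo up] := arc_fresh_lim_bounds n_gt0 jn.
have n1 : (n - n.-1)%N = 1%N by lia.
rewrite n1 /lower /upper mulr1n expr1n !mulr1 in lo up.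
have nup (x : R) : n%:R * (x / n%:R) = x by field.
have nlo (x y : R) : n%:R * (x / n%:R - y * n%:R^-1 ^+ 2) = x - y / n%:R.
  by field.
have := ler_wpM2l (ler0n _ n) up; rewrite nup => h1.
have := ler_wpM2l (ler0n _ n) lo; rewrite nlo => h2.
by rewrite ler_norml; apply/andP; split; lra.
Qed.

Lemma arc_fresh_lim_asymptotics :
  (fun n => n%:R * arc_fresh_lim le l n n.-1) @ \oo --> A + B.
Proof.
apply/cvgrPdist_le => e e0; near=> n.
have n_gt0 : (0 < n)%N by near: n; exact: nbhs_infty_gt.
apply: le_trans (arc_fresh_lim_dist n_gt0) _.
rewrite ler_pdivrMr ?ltr0n // mulrC -ler_pdivrMr // ltW //.
by near: n; exact: nbhs_infty_gtr.
Unshelve. all: by end_near.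
Qed.

End FreshAsymptotics.

Lemma fresh_in_ring_arc01 n (x : state n.+1) : fresh_in (ring_arc 0 1) x = x ord0.
Proof.
apply/existsP/idP => [[k /andP[]] | x0]; last by exists ord0; rewrite in_ring_arc x0.
rewrite in_ring_arc /rpos addn0 modn_small // ltnS leqn0 => /eqP k0.
by rewrite (_ : k = ord0) //; exact: val_inj.
Qed.

Theorem theorem3 (R : realType) (le l : R) (hle : 0 < le) (hl : 0 < l) :
  let rho := le / l in
  exists F : nat -> R,
    (forall (n : nat) (p : R -> state n.+1 -> R),
        is_law_of_process le l p ->
        mean_fresh1 p t @[t --> +oo] --> F n.+1)
    /\ (fun n : nat => n%:R * F n) @ \oo --> rho^-1 + rho^-2.
Proof.
move=> rho; exists (fun n => arc_fresh_lim le l n n.-1); split.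
- move=> n p p_law.
  have -> : mean_fresh1 p = arc_prob p 0 1.
    by apply/funext => t; apply: eq_bigr => x _; rewrite fresh_in_ring_arc01 mulrC.
  by have := arc_prob_cvg (ltn0Sn n) p_law hle hl 0 (ltnSn n); rewrite subSnn.
- by rewrite /rho -exprVn invf_div; exact: arc_fresh_lim_asymptotics.
Qed.
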